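(* Let $\Sigma$ be a self-converse oriented graph on $n$ vertices such that $\det W(\Sigma)\neq 0$, and let $p$ be an odd prime. Suppose that $\mathrm{rank}_p\,W(\Sigma)=n-1$, where $\mathrm{rank}_p$ denotes rank over $\mathbb{F}_p$. Then $\ker W(\Sigma)^{\mathrm T}\subset\mathbb{F}_p^n$ is anisotropic; that is, if $v\in\mathbb{F}_p^n$, $v\neq 0$, and $W(\Sigma)^{\mathrm T}v=0$ over $\mathbb{F}_p$, then $v^{\mathrm T}v\neq 0$ in $\mathbb{F}_p$.
   Context: An oriented graph $\Sigma$ on vertex set $\{v_1,\dots,v_n\}$ is a simple graph in which every edge has been given a direction. Its skew adjacency matrix $S=S(\Sigma)=(S_{ij})$ is the $n\times n$ matrix with $S_{ij}=1$ if $(v_i,v_j)$ is a (directed) edge, $S_{ij}=-1$ if $(v_j,v_i)$ is an edge, and $S_{ij}=0$ otherwise. The walk-matrix of $\Sigma$ is $W(\Sigma)=[e,Se,\ldots,S^{n-1}e]$, where $e$ is the all-ones vector. $\Sigma$ is self-converse if there is a permutation matrix $P$ with $P^{\mathrm T}SP=S^{\mathrm T}=-S$ (equivalently, $\Sigma$ is isomorphic to the oriented graph obtained by reversing all its edges). A subspace $U\subset\mathbb{F}_p^n$ is anisotropic if $u^{\mathrm T}u\neq0$ for every nonzero $u\in U$. *)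

From HB Require Import structures.
From mathcomp Require Import all_boot all_order all_fingroup all_algebra.
Set Implicit Arguments. Unset Strict Implicit. Unset Printing Implicit Defensive.
Import Order.TTheory GRing.Theory Num.Theory.
Local Open Scope ring_scope.

Definition oriented_graph (n : nat) (E : rel 'I_n) : Prop :=
  (forall i, ~~ E i i) /\ (forall i j, E i j -> ~~ E j i).

Definition skew_adj (n : nat) (E : rel 'I_n) : 'M[int]_n :=
  \matrix_(i, j) ((E i j)%:Z - (E j i)%:Z).

Definition walk_matrix (n : nat) (E : rel 'I_n) : 'M[int]_n :=
  \matrix_(i, j) (((skew_adj E ^+ j *m (const_mx 1 : 'cV[int]_n)) i ord0)).

(* Self-converse: P^T S P = S^T = -S for some permutation matrix P. *)
Definition self_converse (n : nat) (E : rel 'I_n) : Prop :=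
  exists s : 'S_n,
    (perm_mx s)^T *m skew_adj E *m perm_mx s = - skew_adj E.

Definition mod_p (p m n : nat) (A : 'M[int]_(m, n)) : 'M['F_p]_(m, n) :=
  map_mx (fun z : int => z%:~R) A.

From HB Require Import structures.
From mathcomp Require Import all_boot all_order all_fingroup all_algebra.
From mathcomp Require Import zify.
Set Implicit Arguments. Unset Strict Implicit. Unset Printing Implicit Defensive.
Import Order.TTheory GRing.Theory Num.Theory.
Local Open Scope ring_scope.

(* Put T = S^T and e = (1,...,1), so that the rows of W^T span the Krylov space
   K of e under T, and let G be the permutation matrix of a self-converse
   symmetry: then T G = - G T and e G = e, so G multiplies e T^k by (-1)^k.
   Over Q the walk matrix is invertible; this forces G^2 = 1 and splits K into
   the +1 and -1 eigenspaces Kp = K (1 + G) and Km = K (1 - G), spanned by the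
   even and odd Krylov vectors, with Km <= Kp T and Kp <= e + Km T.  Hence
   2 rank (1 + G) <= n + 1 and 2 rank (1 - G) <= n, bounds that survive
   reduction modulo p.
   Over F_p, K is a hyperplane; its normal v is an eigenvector of both
   T = - T^T and G, and anticommutation gives v T = 0 and v G = +-v.  If v were
   isotropic it would lie in v^perp = K, hence in Kp or Km; then T drops the
   rank of that part, and a dimension count inside v^perp using the eigenspace
   bounds gives a contradiction. *)

Section Krylov.
Variables (F : fieldType) (n : nat) (T : 'M[F]_n.+1) (e : 'rV[F]_n.+1).

Definition krylov_mx := \matrix_(k < n.+1) (e *m T ^+ k).

Lemma krylov_vec_sub k : (k < n.+1)%N -> (e *m T ^+ k <= krylov_mx)%MS.
Proof.
move=> lt_kn; have -> : e *m T ^+ k = row (Ordinal lt_kn) krylov_mx by rewrite rowK.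
exact: row_sub.
Qed.

Lemma krylov_vec_last_sub : (e *m T ^+ n.+1 <= krylov_mx)%MS.
Proof.
pose c := char_poly T.
have c_last : c`_n.+1 = 1.
  by have /monicP := char_poly_monic T; rewrite lead_coefE size_char_poly.
have CH : \sum_(i < n.+2) c`_i *: T ^+ i = 0.
  have := Cayley_Hamilton T; rewrite -/c -{1}[c]coefK poly_def size_char_poly.
  rewrite rmorph_sum => CH; rewrite -[RHS]CH; apply: eq_bigr => i _.
  by rewrite /= linearZ /= rmorphXn /= horner_mx_X.
move/(congr1 (mulmx e)): CH; rewrite mulmx0 mulmx_sumr big_ord_recr /= c_last.
move/eqP; rewrite scale1r addrC addr_eq0 => /eqP ->.
rewrite eqmx_opp summx_sub // => i _.
by rewrite -scalemxAr scalemx_sub // krylov_vec_sub.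
Qed.

Lemma krylov_mxT : (krylov_mx *m T <= krylov_mx)%MS.
Proof.
apply/row_subP => i; rewrite row_mul rowK -mulmxA mulmxE -exprSr.
have [lt_in|] := ltnP i n; first exact: krylov_vec_sub.
by rewrite leq_eqVlt ltnNge -ltnS ltn_ord orbF => /eqP <-; exact: krylov_vec_last_sub.
Qed.

Lemma krylov_mx_sub_shift : (krylov_mx <= e + krylov_mx *m T)%MS.
Proof.
apply/row_subP => -[[|k] lt_k]; rewrite rowK.
  by rewrite expr0 mulmx1 addsmxSl.
rewrite exprSr -mulmxE mulmxA (submx_trans _ (addsmxSr _ _)) //.
by rewrite submxMr // krylov_vec_sub // ltnW.
Qed.

End Krylov.

Section Perp.
Variables (F : fieldType) (N : nat).
Implicit Type v : 'rV[F]_N.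

Lemma perp_submx m1 m2 (A : 'M_(m1, N)) (B : 'M_(m2, N)) v :
  (B <= A)%MS -> v *m A^T = 0 -> v *m B^T = 0.
Proof. by case/submxP=> D -> vA; rewrite trmx_mul mulmxA vA mul0mx. Qed.

Lemma mxrank_mul_lt m p (X : 'M_(m, N)) (M : 'M_(N, p)) v :
  (v <= X)%MS -> v *m M = 0 -> v != 0 -> (\rank (X *m M) < \rank X)%N.
Proof.
move=> vX vM v0; rewrite -(mxrank_mul_ker X M) -addn1 leq_add2l.
have : (v <= X :&: kermx M)%MS by rewrite sub_capmx vX; apply/sub_kermxP.
by move/mxrankS; rewrite rank_rV v0.
Qed.

End Perp.

Section Codim1.
Variables (F : fieldType) (N m : nat) (A : 'M[F]_(m, N.+1)) (v : 'rV[F]_N.+1).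
Hypotheses (rankA : \rank A = N) (v0 : v != 0) (vA : v *m A^T = 0).

Lemma perp_line y : y *m A^T = 0 -> exists a, y = a *: v.
Proof.
have vK : (v <= kermx A^T)%MS by apply/sub_kermxP.
have rK : \rank (kermx A^T) = 1%N by rewrite mxrank_ker mxrank_tr rankA subSnn.
move/sub_kermxP=> yK; apply/sub_rVP; apply: submx_trans yK _.
by rewrite -(eq_leqif (mxrank_leqif_sup vK)) rK rank_rV v0.
Qed.

Lemma perp_eigenvector (M : 'M_N.+1) :
  (A *m M <= A)%MS -> exists a, v *m M^T = a *: v.
Proof.
move=> AM; apply: perp_line.
by rewrite -mulmxA -trmx_mul (perp_submx AM vA).
Qed.

Lemma self_perp_sub : v *m v^T = 0 -> (v <= A)%MS.
Proof.
move=> vv; have Av : (A <= kermx v^T)%MS.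
  by apply/sub_kermxP; rewrite -[A]trmxK -trmx_mul vA trmx0.
have rKv : \rank (kermx v^T) = N by rewrite mxrank_ker mxrank_tr rank_rV v0 subn1.
apply: submx_trans (_ : (v <= kermx v^T)%MS) _; first exact/sub_kermxP.
by rewrite -(eq_leqif (mxrank_leqif_sup Av)) rKv rankA.
Qed.

End Codim1.

Section Involution.
Variables (F : fieldType) (n : nat) (G : 'M[F]_n).
Hypotheses (two_neq0 : 2%:R != 0 :> F) (GG : G *m G = 1%:M).

Lemma mxrank_adds_eigen_pm m1 m2 (A : 'M_(m1, n)) (B : 'M_(m2, n)) :
  A *m G = A -> B *m G = - B -> \rank (A + B)%MS = (\rank A + \rank B)%N.
Proof.
move=> AG BG; rewrite -mxrank_sum_cap; set C := (A :&: B)%MS.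
suff -> : C = 0 by rewrite mxrank0 addn0.
have /submxP[DA CA] : (C <= A)%MS by apply: capmxSl.
have /submxP[DB CB] : (C <= B)%MS by apply: capmxSr.
have CG : C *m G = C by rewrite CA -mulmxA AG.
have CGN : C *m G = - C by rewrite CB -mulmxA BG mulmxN.
have : 2%:R *: C = 0 by rewrite scaler_nat mulr2n -{1}CG CGN addNr.
by move/eqP; rewrite scaler_eq0 (negPf two_neq0) => /eqP.
Qed.

Lemma mul_one_addG : (1%:M + G) *m G = 1%:M + G.
Proof. by rewrite mulmxDl mul1mx GG addrC. Qed.

Lemma mul_one_subG : (1%:M - G) *m G = - (1%:M - G).
Proof. by rewrite mulmxBl mul1mx GG opprB. Qed.

Lemma mxrank_one_addG_subG : (n <= \rank (1%:M + G)%R + \rank (1%:M - G)%R)%N.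
Proof.
apply: leq_trans (mxrank_adds_leqif _ _).
rewrite -[X in (X <= _)%N](mxrank1 F n) mxrankS //.
have halves : 1%:M = (2%:R : F)^-1 *: ((1%:M + G) + (1%:M - G)) :> 'M_n.
  by rewrite addrCA addrK -mulr2n -scaler_nat scalerA mulVf // scale1r.
by rewrite {1}halves scalemx_sub // addmx_sub_adds.
Qed.

Lemma mxrank_perp_eigen_pm m1 m2 (A : 'M_(m1, n)) (B : 'M_(m2, n)) (v : 'rV_n) :
  A *m G = A -> B *m G = - B -> v *m A^T = 0 -> v *m B^T = 0 -> v != 0 ->
  (\rank A + \rank B < n)%N.
Proof.
move=> AG BG vA vB v0; rewrite -(mxrank_adds_eigen_pm AG BG).
have rK : \rank (kermx v^T) = n.-1 by rewrite mxrank_ker mxrank_tr rank_rV v0 subn1.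
have n_gt0 : (0 < n)%N by move: (rank_leq_col v); rewrite rank_rV v0.
apply: (@leq_ltn_trans (\rank (kermx v^T))); last by rewrite rK ltn_predL.
rewrite mxrankS // addsmx_sub; apply/andP; split; apply/sub_kermxP.
  by rewrite -[A]trmxK -trmx_mul vA trmx0.
by rewrite -[B]trmxK -trmx_mul vB trmx0.
Qed.

End Involution.

Section AnticommutingInvolution.
Variables (F : fieldType) (n : nat) (T G : 'M[F]_n.+1) (e : 'rV[F]_n.+1).
Hypotheses (TG : T *m G = - (G *m T)) (eG : e *m G = e).
Local Notation K := (krylov_mx T e).

Lemma krylov_vecG k : e *m T ^+ k *m G = (-1) ^+ k *: (e *m T ^+ k).
Proof.
elim: k => [|k IHk]; first by rewrite expr0 mulmx1 eG scale1r.
rewrite exprSr -mulmxE !mulmxA -mulmxA TG mulmxN mulmxA IHk.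
by rewrite -scalemxAl exprS mulN1r scaleNr.
Qed.

Lemma krylov_mxG : (K *m G <= K)%MS.
Proof. by apply/row_subP => i; rewrite row_mul rowK krylov_vecG scalemx_sub // krylov_vec_sub. Qed.

Lemma krylov_unit_involutive : K \in unitmx -> G *m G = 1%:M.
Proof.
move=> Kunit; apply: (can_inj (mulKmx Kunit)); rewrite mulmx1.
apply/row_matrixP => i; rewrite !row_mul rowK mulmxA krylov_vecG -scalemxAl krylov_vecG.
by rewrite scalerA -exprMn mulrNN mulr1 expr1n scale1r.
Qed.

Section Involutive.
Hypotheses (two_neq0 : 2%:R != 0 :> F) (GG : G *m G = 1%:M).
Local Notation Kp := (K *m (1%:M + G)).
Local Notation Km := (K *m (1%:M - G)).

Lemma krylov_plusG : Kp *m G = Kp.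
Proof. by rewrite -mulmxA mul_one_addG. Qed.

Lemma krylov_minusG : Km *m G = - Km.
Proof. by rewrite -mulmxA mul_one_subG // mulmxN. Qed.

Lemma krylov_plus_sub : (Kp <= K)%MS.
Proof. by rewrite mulmxDr mulmx1 addmx_sub // krylov_mxG. Qed.

Lemma krylov_minus_sub : (Km <= K)%MS.
Proof. by rewrite mulmxBr mulmx1 addmx_sub ?eqmx_opp // krylov_mxG. Qed.

Lemma mxrank_krylov_plus_minus : (\rank Kp + \rank Km)%N = \rank K.
Proof.
rewrite -(mxrank_adds_eigen_pm two_neq0 krylov_plusG krylov_minusG).
apply/eqP; rewrite eqn_leq !mxrankS //; last first.
  by rewrite addsmx_sub krylov_plus_sub krylov_minus_sub.
have halves : K = (2%:R : F)^-1 *: (Kp + Km).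
  rewrite -mulmxDr addrCA addrK -mulr2n -scaler_nat -scalemxAr mulmx1.
  by rewrite scalerA mulVf // scale1r.
by rewrite {1}halves scalemx_sub // addmx_sub_adds.
Qed.

Lemma krylov_minus_sub_plusT : (Km <= Kp *m T)%MS.
Proof.
have -> : Kp *m T = K *m T *m (1%:M - G).
  by rewrite -!mulmxA mulmxDl mulmxBr mul1mx mulmx1 TG opprK.
apply: submx_trans (submxMr _ (krylov_mx_sub_shift T e)) _.
by rewrite addsmxMr addsmx_sub mulmxBr mulmx1 eG subrr sub0mx /=.
Qed.

Lemma krylov_plus_sub_minusT : (Kp <= e + Km *m T)%MS.
Proof.
have -> : Km *m T = K *m T *m (1%:M + G).
  by rewrite -!mulmxA mulmxBl mulmxDr mul1mx mulmx1 TG.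
apply: submx_trans (submxMr _ (krylov_mx_sub_shift T e)) _.
rewrite addsmxMr; apply: addsmxS => //.
by rewrite mulmxDr mulmx1 eG -mulr2n -scaler_nat scalemx_sub.
Qed.

Lemma krylov_unit_rank_bounds : K \in unitmx ->
  (2 * \rank (1%:M + G)%R <= n.+2)%N /\ (2 * \rank (1%:M - G)%R <= n.+1)%N.
Proof.
move=> Kunit; have Kfull : row_full K by rewrite row_full_unit.
have rank_sum := mxrank_krylov_plus_minus; rewrite (mxrank_unit Kunit) in rank_sum.
have le_minus : (\rank Km <= \rank Kp)%N.
  exact: leq_trans (mxrankS krylov_minus_sub_plusT) (mxrankM_maxl _ _).
have le_plus : (\rank Kp <= 1 + \rank Km)%N.
  apply: leq_trans (mxrankS krylov_plus_sub_minusT) _.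
  apply: leq_trans (mxrank_adds_leqif _ _) _.
  by rewrite leq_add ?rank_leq_row ?mxrankM_maxl.
rewrite !(eqmxMfull _ Kfull) in rank_sum le_minus le_plus; lia.
Qed.

Lemma anticomm_eigen_mul0 (v : 'rV_n.+1) la mu :
  v *m G = la *: v -> la != 0 -> v *m T = mu *: v -> v *m T = 0.
Proof.
move=> vG la0 vT; have : (2%:R * (la * mu)) *: v = 0.
  have := congr1 (mulmx v) TG; rewrite mulmxN !mulmxA vT -scalemxAl vG.
  rewrite -scalemxAl vT !scalerA [mu * la]mulrC => /eqP.
  by rewrite -addr_eq0 -scalerDl mulr_natl mulr2n => /eqP.
move/eqP; rewrite scaler_eq0 !mulf_eq0 (negPf two_neq0) (negPf la0) /=.
by rewrite vT; case/orP=> /eqP ->; rewrite ?scale0r ?scaler0.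
Qed.

Section Anisotropy.
Hypotheses (Tskew : T^T = - T) (Gsym : G^T = G) (rankK : \rank K = n).
Hypotheses (plus_bound : (2 * \rank (1%:M + G)%R <= n.+2)%N)
  (minus_bound : (2 * \rank (1%:M - G)%R <= n.+1)%N).

Section SelfPerpVector.
Variable v : 'rV[F]_n.+1.
Hypotheses (v0 : v != 0) (vK : v *m K^T = 0) (vT : v *m T = 0) (v_sub : (v <= K)%MS).

Lemma self_perp_not_fixed : v *m G != v.
Proof.
apply/eqP => vG; have vP : (v <= Kp)%MS.
  have v2 : v *m (1%:M + G) = 2%:R *: v by rewrite mulmxDr mulmx1 vG scaler_nat mulr2n.
  by rewrite -(eqmx_scale v two_neq0) -v2 submxMr.
have lt_plus := mxrank_mul_lt vP vT v0.
have le_minus := mxrankS krylov_minus_sub_plusT.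
have rank_sum := mxrank_krylov_plus_minus; rewrite rankK in rank_sum.
have perpG : v *m (1%:M - G)^T = 0.
  by rewrite linearB /= trmx1 Gsym mulmxBr mulmx1 vG subrr.
have indep := mxrank_perp_eigen_pm two_neq0 krylov_plusG (mul_one_subG GG)
  (perp_submx krylov_plus_sub vK) perpG v0.
have := mxrank_one_addG_subG G two_neq0.
(* [2 rank Kp > n] and [2 rank (1 - G) >= n], yet Kp and the image of [1 - G]
   are independent subspaces of the hyperplane orthogonal to v. *)
lia.
Qed.

Lemma self_perp_not_antifixed : v *m G != - v.
Proof.
apply/eqP => vG; have vM : (v <= Km)%MS.
  have v2 : v *m (1%:M - G) = 2%:R *: v by rewrite mulmxBr mulmx1 vG opprK scaler_nat mulr2n.
  by rewrite -(eqmx_scale v two_neq0) -v2 submxMr.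
have lt_minus := mxrank_mul_lt vM vT v0.
have le_plus : (\rank Kp <= 1 + \rank (Km *m T))%N.
  apply: leq_trans (mxrankS krylov_plus_sub_minusT) _.
  by apply: leq_trans (mxrank_adds_leqif _ _) _; rewrite leq_add2r rank_leq_row.
have rank_sum := mxrank_krylov_plus_minus; rewrite rankK in rank_sum.
have perpG : v *m (1%:M + G)^T = 0.
  by rewrite linearD /= trmx1 Gsym mulmxDr mulmx1 vG subrr.
have indep := mxrank_perp_eigen_pm two_neq0 (mul_one_addG GG) krylov_minusG perpG
  (perp_submx krylov_minus_sub vK) v0.
have := mxrank_one_addG_subG G two_neq0.
lia.
Qed.

End SelfPerpVector.

Theorem krylov_perp_anisotropic (v : 'rV_n.+1) :
  v != 0 -> v *m K^T = 0 -> v *m v^T != 0.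
Proof.
move=> v0 vK; apply/eqP => vv.
have [la vG] := perp_eigenvector rankK v0 vK krylov_mxG; rewrite Gsym in vG.
have [mu vT] := perp_eigenvector rankK v0 vK (krylov_mxT T e).
have la2 : la ^+ 2 = 1.
  have : (la ^+ 2 - 1) *: v = 0.
    by rewrite scalerBl scale1r expr2 -scalerA -vG scalemxAl -vG -mulmxA GG mulmx1 subrr.
  by move/eqP; rewrite scaler_eq0 (negPf v0) orbF subr_eq0 => /eqP.
have la0 : la != 0 by apply: contra_eq_neq la2 => ->; rewrite expr0n eq_sym oner_eq0.
have vT0 : v *m T = 0.
  by apply: (anticomm_eigen_mul0 vG la0 (mu := - mu)); rewrite scaleNr -vT Tskew mulmxN opprK.
have v_sub := self_perp_sub rankK v0 vK vv.
have := sqrf_eq1 la; rewrite la2 eqxx => /esym/orP[] /eqP la1; rewrite la1 in vG.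
  by move: (self_perp_not_fixed v0 vK vT0 v_sub); rewrite vG scale1r eqxx.
by move: (self_perp_not_antifixed v0 vK vT0 v_sub); rewrite vG scaleN1r eqxx.
Qed.

End Anisotropy.
End Involutive.
End AnticommutingInvolution.

(* A maximal nonsingular minor over F1 comes from an integer minor with nonzero
   determinant, which stays nonsingular over F2. *)
Lemma mxrank_map_int_le (F1 F2 : fieldType) m n (A : 'M[int]_(m, n)) :
  (forall z : int, z%:~R = 0 :> F2 -> z = 0) ->
  (\rank (map_mx (fun z : int => z%:~R : F1) A) <=
   \rank (map_mx (fun z : int => z%:~R : F2) A))%N.
Proof.
move=> intr2_inj; set A1 := map_mx _ A; set A2 := map_mx _ A.
pose f := maxrankfun A1.
have full1 : row_full (rowsub f A1)^T.
  by rewrite /row_full mxrank_tr; exact: maxrowsub_free.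
pose g := fullrankfun full1; pose C := rowsub g (rowsub f A)^T.
have C1 : rowsub g (rowsub f A1)^T = map_mx (fun z : int => z%:~R : F1) C.
  by rewrite /C map_mxsub -map_trmx map_mxsub.
have detC : \det C != 0.
  move: (fullrowsub_unit full1); rewrite C1 unitmxE det_map_mx unitfE.
  by apply: contraNneq => ->; rewrite rmorph0.
have C2unit : map_mx (fun z : int => z%:~R : F2) C \in unitmx.
  by rewrite unitmxE det_map_mx unitfE; apply: contra detC => /eqP /intr2_inj ->.
rewrite -[X in (X <= _)%N](mxrank_unit C2unit) /C map_mxsub -map_trmx map_mxsub -/A2.
rewrite rowsubE; apply: leq_trans (mxrankM_maxr _ _) _.
by rewrite mxrank_tr rowsubE; exact: mxrankM_maxr.
Qed.

Lemma trmxX (R : comNzRingType) n (A : 'M[R]_n) k : (A ^+ k)^T = A^T ^+ k.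
Proof.
elim: k => [|k IHk]; first by rewrite !expr0 trmx1.
by rewrite exprSr exprS -!mulmxE trmx_mul IHk.
Qed.

Lemma const_mx_perm (R : nzRingType) n (s : 'S_n) (a : R) :
  (const_mx a : 'rV_n) *m perm_mx s = const_mx a.
Proof. by rewrite -[s]invgK -col_permE; apply/matrixP => i j; rewrite !mxE. Qed.

Section SelfConverse.
Variables (n : nat) (E : rel 'I_n.+1) (s : 'S_n.+1).
Hypothesis self_conv : (perm_mx s)^T *m skew_adj E *m perm_mx s = - skew_adj E.
Local Notation intr R := (fun z : int => z%:~R : R).
Local Notation T R := (map_mx (intr R) (skew_adj E))^T.
Local Notation e R := (const_mx 1 : 'rV[R]_n.+1).

Lemma skew_adj_tr : (skew_adj E)^T = - skew_adj E.
Proof. by apply/matrixP => i j; rewrite !mxE opprB. Qed.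

Lemma skew_adj_map_tr (R : nzRingType) : (T R)^T = - T R.
Proof. by rewrite trmxK map_trmx skew_adj_tr map_mxN opprK. Qed.

Lemma walk_matrix_krylov (R : fieldType) :
  (map_mx (intr R) (walk_matrix E))^T = krylov_mx (T R) (e R).
Proof.
apply/row_matrixP => k; rewrite rowK -trmxX -rmorphXn.
apply/rowP => j; rewrite !mxE rmorph_sum; apply: eq_bigr => i _.
by rewrite !mxE rmorphM /= mul1r mulr1.
Qed.

Lemma skew_adj_perm : skew_adj E *m perm_mx s = - (perm_mx s *m skew_adj E).
Proof.
have PPt : perm_mx s *m (perm_mx s)^T = 1%:M :> 'M[int]_n.+1.
  by rewrite tr_perm_mx -perm_mxM mulgV perm_mx1.
by rewrite -[LHS]mul1mx -PPt -mulmxA (mulmxA (perm_mx s)^T) self_conv mulmxN.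
Qed.

Lemma self_converse_anticomm (R : nzRingType) :
  T R *m perm_mx s = - (perm_mx s *m T R).
Proof.
rewrite map_trmx skew_adj_tr map_mxN mulNmx mulmxN opprK.
have -> : perm_mx s = map_mx (intr R) (perm_mx s) by rewrite map_perm_mx.
by rewrite -!map_mxM skew_adj_perm map_mxN opprK.
Qed.

Hypothesis detW : \det (walk_matrix E) != 0.

Lemma walk_krylov_unit : krylov_mx (T rat) (e rat) \in unitmx.
Proof. by rewrite -walk_matrix_krylov unitmx_tr unitmxE det_map_mx unitfE intr_eq0. Qed.

Lemma self_converse_perm_mx_involutive :
  perm_mx s *m perm_mx s = 1%:M :> 'M[rat]_n.+1.
Proof.
exact: krylov_unit_involutive (self_converse_anticomm rat) (const_mx_perm s 1) walk_krylov_unit.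
Qed.

Lemma self_converse_involutive : (s * s)%g = 1%g.
Proof.
apply/permP => i; rewrite perm1.
have := congr1 (fun M : 'M[rat]_n.+1 => M i ((s * s)%g i)) self_converse_perm_mx_involutive.
by rewrite -perm_mxM !mxE eqxx; case: eqP => // _ /eqP; rewrite eq_sym oner_eq0.
Qed.

(* The bounds hold over Q, where W is invertible, and ranks can only drop
   modulo p. *)
Lemma self_converse_rank_bounds (R : fieldType) :
  (2 * \rank (1%:M + perm_mx s : 'M[R]_n.+1)%R <= n.+2)%N /\
  (2 * \rank (1%:M - perm_mx s : 'M[R]_n.+1)%R <= n.+1)%N.
Proof.
have [plus_rat minus_rat] := krylov_unit_rank_bounds (self_converse_anticomm rat)
  (const_mx_perm s 1) (isT : 2%:R != 0 :> rat) self_converse_perm_mx_involutive walk_krylov_unit.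
have plus_map (K : fieldType) : 1%:M + perm_mx s = map_mx (intr K) (1%:M + perm_mx s).
  by rewrite map_mxD map_mx1 map_perm_mx.
have minus_map (K : fieldType) : 1%:M - perm_mx s = map_mx (intr K) (1%:M - perm_mx s).
  by rewrite map_mxB map_mx1 map_perm_mx.
rewrite !plus_map !minus_map in plus_rat minus_rat *.
have intr_rat_inj (z : int) : z%:~R = 0 :> rat -> z = 0 by move/eqP; rewrite intr_eq0 => /eqP.
by split; [apply: leq_trans plus_rat | apply: leq_trans minus_rat];
  rewrite leq_mul2l mxrank_map_int_le.
Qed.

End SelfConverse.

Theorem theorem1p8 (n : nat) (E : rel 'I_n) (p : nat) :
  oriented_graph E ->
  self_converse E ->
  \det (walk_matrix E) != 0 ->
  prime p -> odd p ->
  \rank (mod_p p (walk_matrix E)) = n.-1 ->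
  forall v : 'cV['F_p]_n,
    v != 0 ->
    (mod_p p (walk_matrix E))^T *m v = 0 ->
    v^T *m v != 0.
Proof.
move=> _ [s self_conv] detW p_prime p_odd rankW v v0 Wv.
case: n E s self_conv detW rankW v v0 Wv => [|n] E s self_conv detW rankW v v0 Wv.
  by rewrite [v]flatmx0 eqxx in v0.
have two_neq0 : 2%:R != 0 :> 'F_p.
  rewrite -(dvdn_pcharf (pchar_Fp p_prime)); apply: contraL p_odd => /(@dvdn_leq _ 2 isT).
  by have := prime_gt1 p_prime; lia.
have inv_s := self_converse_involutive self_conv detW.
have GG : perm_mx s *m perm_mx s = 1%:M :> 'M['F_p]_n.+1 by rewrite -perm_mxM inv_s perm_mx1.
have Gsym : (perm_mx s)^T = perm_mx s :> 'M['F_p]_n.+1.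
  by rewrite tr_perm_mx -[s^-1%g]mul1g -inv_s mulgK.
have rankK := rankW; rewrite -mxrank_tr /mod_p walk_matrix_krylov in rankK.
have [plus_bound minus_bound] := self_converse_rank_bounds self_conv detW 'F_p.
have := krylov_perp_anisotropic (self_converse_anticomm self_conv 'F_p) (const_mx_perm s 1)
  two_neq0 GG (skew_adj_map_tr E 'F_p) Gsym rankK plus_bound minus_bound (v := v^T).
rewrite trmxK; apply; first by rewrite trmx_eq0.
by rewrite -walk_matrix_krylov trmxK -[X in _ *m X]trmxK -trmx_mul Wv trmx0.
Qed.
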